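(* Let $a,b,c,d,e,f,g,h\in\mathbb{C}$ and let $$R=\begin{pmatrix} a&0&0&b\\ 0&c&d&0\\ 0&e&f&0\\ g&0&0&h\end{pmatrix}$$ act on $\mathbb{C}^2\otimes\mathbb{C}^2$ in the computational basis $|00\rangle,|01\rangle,|10\rangle,|11\rangle$. Suppose $R$ is unitary, satisfies the braided Yang–Baxter equation $(R\otimes I)(I\otimes R)(R\otimes I)=(I\otimes R)(R\otimes I)(I\otimes R)$ ($I$ the $2\times 2$ identity), and is entangling. Then $R$ is of one of the following four forms: 1. $R=\begin{pmatrix} a&0&0&0\\ 0&0&d&0\\ 0&e&0&0\\ 0&0&0&h\end{pmatrix}$ with $|a|=|d|=|e|=|h|=1$; a matrix of this form is a unitary solution of the Yang–Baxter equation, and it is entangling if and only if $ah\neq de$. 2. $R=\begin{pmatrix} 0&0&0&b\\ 0&c&0&0\\ 0&0&c&0\\ g&0&0&0\end{pmatrix}$ with $|b|=|c|=|g|=1$; a matrix of this form is a unitary solution of the Yang–Baxter equation, and it is entangling if and only if $bg\neq c^2$. 3. $R=\begin{pmatrix} a&0&0&b\\ 0&a&\pm a&0\\ 0&\mp a&a&0\\ g&0&0&a\end{pmatrix}$ (with the signs in positions $(2,3)$ and $(3,2)$ opposite) where $bg=-a^2$ and $|a|=|b|=|g|=\tfrac{1}{\sqrt2}$; such $R$ is always entangling. 4. $R=\begin{pmatrix} a&0&0&b\\ 0&c&d&0\\ 0&d&c&0\\ g&0&0&h\end{pmatrix}$ with $a,b,c,d,g,h$ all nonzero and satisfying $a^2-d^2=d^2-h^2=ac-hc$,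 $a^2+h^2=2d^2$, $bg=c^2$, together with $a\bar a+b\bar b=1$, $c\bar c+d\bar d=1$, $g\bar g+h\bar h=1$, $a\bar g+b\bar h=0$, $c\bar d+d\bar c=0$; such $R$ is always entangling.
   Context: A two-qubit state $|\Phi\rangle\in\mathbb{C}^2\otimes\mathbb{C}^2$ is un-entangled if it can be written as a tensor product $u\otimes v$ of two vectors in $\mathbb{C}^2$, and entangled otherwise. A $4\times4$ matrix $R$ is called entangling if there exists an un-entangled state $|\Phi\rangle$ such that $R|\Phi\rangle$ is entangled. Unitary means $R^{-1}=R^{\dagger}$ (conjugate transpose). *)

(* The complex field C is modelled as R[i] (complex numbers
   over R, mathcomp-real-closed) for an arbitrary realType R (a model of the
   real numbers; every realType is isomorphic to the reals). *)
From HB Require Import structures.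
From mathcomp Require Import all_boot all_order all_algebra.
From mathcomp Require Import reals.
From mathcomp Require Export complex mxtens.
Set Implicit Arguments. Unset Strict Implicit. Unset Printing Implicit Defensive.
Import Order.TTheory GRing.Theory Num.Theory.
Local Open Scope ring_scope.

Section Defs.
Variable R : realType.
Local Notation C := R[i].

Definition adjmx {m n} (A : 'M[C]_(m, n)) : 'M[C]_(n, m) :=
  (map_mx Num.conj A)^T.

Definition unitary {n} (A : 'M[C]_n) : Prop :=
  A \in unitmx /\ invmx A = adjmx A.

(* 4x4 matrix from its rows (computational basis |00>,|01>,|10>,|11>) *)
Definition mx4 (r0 r1 r2 r3 : seq C) : 'M[C]_4 :=
  \matrix_(i < 4, j < 4) nth 0 (nth [::] [:: r0; r1; r2; r3] i) j.

Definition I2 : 'M[C]_2 := 1%:M.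

(* R (x) I and I (x) R as 8x8 matrices (Kronecker product, index i*n+j) *)
Definition RI (A : 'M[C]_4) : 'M[C]_8 := A *t I2.
Definition IR (A : 'M[C]_4) : 'M[C]_8 := I2 *t A.

Definition braided_YBE (A : 'M[C]_4) : Prop :=
  RI A *m IR A *m RI A = IR A *m RI A *m IR A.

Definition unentangled (Phi : 'cV[C]_4) : Prop :=
  exists u v : 'cV[C]_2, Phi = u *t v.

Definition entangled (Phi : 'cV[C]_4) : Prop := ~ unentangled Phi.

Definition entangling (A : 'M[C]_4) : Prop :=
  exists Phi : 'cV[C]_4, unentangled Phi /\ entangled (A *m Phi).

End Defs.

(* If one of the corners
   b, g vanishes, unitarity kills both, and the equations leave either form 1
   or a scalar matrix.  Otherwise they force f = c and (d - e) (b g + c^2) = 0,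
   and the subcases d = e = 0, d = e != 0 and d != e give forms 2, 4 and 3
   (when d = e = 0, a != 0 would force |a|^2 = 2).  Entanglement is decided by
   the determinant criterion, w is a product state iff w00 w11 = w01 w10, which
   for R (u (x) v) is an explicit quadratic form in the coordinates of u and v:
   it vanishes identically for a scalar matrix and equals a g at u = v = |0>. *)

From HB Require Import structures.
From mathcomp Require Import all_boot all_order all_algebra.
From mathcomp Require Import reals complex mxtens ring.
Set Implicit Arguments. Unset Strict Implicit. Unset Printing Implicit Defensive.
Import Order.TTheory GRing.Theory Num.Theory.
Local Open Scope ring_scope.

Lemma eq_by_lincomb1 (K : pzRingType) (k x y l r : K) :
  l = r -> x - y = k * (l - r) -> x = y.
Proof. by move=> -> /eqP; rewrite subrr mulr0 subr_eq0 => /eqP. Qed.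
Arguments eq_by_lincomb1 {K} k {x y l r}.

Lemma eq_by_lincomb2 (K : pzRingType) (k1 k2 x y l1 r1 l2 r2 : K) :
  l1 = r1 -> l2 = r2 -> x - y = k1 * (l1 - r1) + k2 * (l2 - r2) -> x = y.
Proof. by move=> -> -> /eqP; rewrite !subrr !mulr0 addr0 subr_eq0 => /eqP. Qed.
Arguments eq_by_lincomb2 {K} k1 k2 {x y l1 r1 l2 r2}.

(* Matrices are given by entry functions on nat, so that the entries of explicit
   matrix products are computed by evaluation. *)
Section MatrixOfFunction.
Variable K : pzRingType.
Implicit Types F G : nat -> nat -> K.

Definition mx_of_fun m n F : 'M[K]_(m, n) := \matrix_(i, j) F i j.

Definition idf (i j : nat) : K := (i == j)%:R.

Definition mulf n F G (i j : nat) : K := \sum_(0 <= k < n) F i k * G k j.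

Definition tensf m n F G (i j : nat) : K :=
  F (i %/ m)%N (j %/ n)%N * G (i %% m)%N (j %% n)%N.

Lemma mx_of_funP m n F G :
  mx_of_fun m n F = mx_of_fun m n G <-> forall (i : 'I_m) (j : 'I_n), F i j = G i j.
Proof.
split=> [/matrixP E i j | E]; last by apply/matrixP => i j; rewrite !mxE.
by have := E i j; rewrite !mxE.
Qed.

Lemma scalar_mx_fun n : 1%:M = mx_of_fun n n idf.
Proof. by apply/matrixP => i j; rewrite !mxE. Qed.

Lemma mulmx_fun m n p F G :
  mx_of_fun m n F *m mx_of_fun n p G = mx_of_fun m p (mulf n F G).
Proof.
apply/matrixP => i j; rewrite !mxE /mulf big_mkord.
by apply: eq_bigr => k _; rewrite !mxE.
Qed.

Lemma tensmx_fun m1 n1 m2 n2 F G :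
  mx_of_fun m1 n1 F *t mx_of_fun m2 n2 G = mx_of_fun (m1 * m2) (n1 * n2) (tensf m2 n2 F G).
Proof. by apply/matrixP => i j; rewrite !mxE. Qed.

End MatrixOfFunction.
Arguments idf {K}.

Section ExplicitMatrices.
Variable R : realType.
Local Notation C := R[i].
Implicit Types F : nat -> nat -> C.

Definition adjf F (i j : nat) : C := (F j i)^*.

Lemma adjmx_fun m n F : adjmx (mx_of_fun m n F) = mx_of_fun n m (adjf F).
Proof. by apply/matrixP => i j; rewrite !mxE. Qed.

Lemma unitaryP n (A : 'M[C]_n) : unitary A <-> A *m adjmx A = 1%:M.
Proof.
split=> [[Au <-] | AA1]; first exact: mulmxV.
have [Au _] := mulmx1_unit AA1; split=> //.
by rewrite -[invmx A]mulmx1 -AA1 mulmxA mulVmx ?mul1mx.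
Qed.

Lemma unitary_adj_mulmx n (A : 'M[C]_n) : unitary A -> adjmx A *m A = 1%:M.
Proof. by case=> Au <-; exact: mulVmx. Qed.

Lemma unitary_funP n F :
  unitary (mx_of_fun n n F) <-> forall i j : 'I_n, mulf n F (adjf F) i j = idf i j.
Proof. by rewrite unitaryP adjmx_fun mulmx_fun scalar_mx_fun mx_of_funP. Qed.

Lemma unitary_fun_cols n F :
  unitary (mx_of_fun n n F) -> forall i j : 'I_n, mulf n (adjf F) F i j = idf i j.
Proof. by move/unitary_adj_mulmx; rewrite adjmx_fun mulmx_fun scalar_mx_fun mx_of_funP. Qed.

Lemma braided_YBE_funP F :
  braided_YBE (mx_of_fun 4 4 F) <->
  forall i j : 'I_8,
    mulf 8 (mulf 8 (tensf 2 2 F idf) (tensf 4 4 idf F)) (tensf 2 2 F idf) i j =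
    mulf 8 (mulf 8 (tensf 4 4 idf F) (tensf 2 2 F idf)) (tensf 4 4 idf F) i j.
Proof. by rewrite /braided_YBE /RI /IR /I2 scalar_mx_fun !tensmx_fun !mulmx_fun mx_of_funP. Qed.

End ExplicitMatrices.

Section TwoQubits.
Variable R : realType.
Local Notation C := R[i].

Definition col2 (x0 x1 : C) : 'cV[C]_2 := mx_of_fun 2 1 (fun i _ => nth 0 [:: x0; x1] i).

Definition col4 (w0 w1 w2 w3 : C) : 'cV[C]_4 :=
  mx_of_fun 4 1 (fun i _ => nth 0 [:: w0; w1; w2; w3] i).

Definition tensor_det (w : 'cV[C]_4) : C := w 0 0 * w 3 0 - w 1 0 * w 2 0.

Lemma col2_eta (u : 'cV[C]_2) : u = col2 (u 0 0) (u 1 0).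
Proof.
apply/matrixP => i j; rewrite (ord1 j) !mxE.
by case: i => [[|[|//]] ?]; congr (u _ _); apply: val_inj.
Qed.

Lemma col4_eta (w : 'cV[C]_4) : w = col4 (w 0 0) (w 1 0) (w 2 0) (w 3 0).
Proof.
apply/matrixP => i j; rewrite (ord1 j) !mxE.
by case: i => [[|[|[|[|//]]]] ?]; congr (w _ _); apply: val_inj.
Qed.

Lemma tensmx_col2 x0 x1 y0 y1 :
  col2 x0 x1 *t col2 y0 y1 = col4 (x0 * y0) (x0 * y1) (x1 * y0) (x1 * y1).
Proof.
rewrite tensmx_fun; apply/mx_of_funP => i j; rewrite (ord1 j) /tensf.
by case: i => [[|[|[|[|//]]]] ?]; rewrite /divn /modn.
Qed.

Lemma tensor_det_col4 w0 w1 w2 w3 : tensor_det (col4 w0 w1 w2 w3) = w0 * w3 - w1 * w2.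
Proof. by rewrite /tensor_det !mxE. Qed.

Lemma col4_tensor w0 w1 w2 w3 : w0 * w3 = w1 * w2 ->
  exists u v : 'cV[C]_2, col4 w0 w1 w2 w3 = u *t v.
Proof.
move=> det0; have [w0_0 | w0_neq0] := eqVneq w0 0.
  rewrite w0_0 mul0r in det0 *.
  have [w1_0 | w1_neq0] := eqVneq w1 0.
    by exists (col2 0 1), (col2 w2 w3); rewrite tensmx_col2 w1_0 !mul0r !mul1r.
  have w2_0 : w2 = 0 by apply: (mulfI w1_neq0); rewrite -det0 mulr0.
  by exists (col2 w1 w3), (col2 0 1); rewrite tensmx_col2 w2_0 !mulr0 !mulr1.
exists (col2 1 (w2 / w0)), (col2 w0 w1); rewrite tensmx_col2 !mul1r divfK //.
by congr col4; apply: (mulfI w0_neq0); rewrite det0; field.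
Qed.

Lemma unentangledP (w : 'cV[C]_4) : unentangled w <-> tensor_det w = 0.
Proof.
split=> [[u [v ->]] | det0].
  by rewrite (col2_eta u) (col2_eta v) tensmx_col2 tensor_det_col4; ring.
by rewrite (col4_eta w); apply/col4_tensor/subr0_eq.
Qed.

Lemma entanglingP (A : 'M[C]_4) :
  entangling A <-> exists u v : 'cV[C]_2, tensor_det (A *m (u *t v)) != 0.
Proof.
split=> [[_ [[u [v ->]] entA]] | [u [v detA]]].
  by exists u, v; apply/eqP => /unentangledP.
by exists (u *t v); split; [exists u, v | move/unentangledP/eqP; rewrite (negbTE detA)].
Qed.

End TwoQubits.

Section ComplexFacts.
Variable R : realType.
Local Notation C := R[i].

Lemma orthoC_sym (x y u v : C) : x * y^* + u * v^* = 0 -> y * x^* + v * u^* = 0.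
Proof.
move=> xy_uv; rewrite -[LHS]conjCK rmorphD !rmorphM /= !conjCK.
by rewrite (mulrC y^*) (mulrC v^*) xy_uv conjC0.
Qed.

Lemma mul_conjC1_neq0 (x : C) : x * x^* = 1 -> x != 0.
Proof. by move=> xx; rewrite -mul_conjC_eq0 xx oner_eq0. Qed.

Lemma normC_eq (x y : C) : 0 <= y -> x * x^* = y ^+ 2 -> `|x| = y.
Proof. by move=> y_ge0 xx; apply/eqP; rewrite -(eqrXn2 (ltn0Sn 1)) ?normCK ?xx. Qed.

Lemma normC_eq1 (x : C) : `|x| = 1 <-> x * x^* = 1.
Proof.
split=> [x1 | xx]; first by rewrite -normCK x1 expr1n.
by apply: normC_eq; rewrite ?ler01 ?expr1n.
Qed.

Lemma normC_invsqrt2 (x : C) : x * x^* = 2^-1 -> `|x| = (sqrtC 2)^-1.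
Proof. by move=> xx; apply: normC_eq; rewrite ?invr_ge0 ?sqrtC_ge0 ?ler0n // exprVn sqrtCK. Qed.

Lemma mul_conjC_1subr (w : C) : w ^+ 2 = -1 -> (1 - w) * (1 - w)^* = 2.
Proof.
move=> w2; have ww : w * w^* = 1 by rewrite -normCK -normrX w2 normrN normr1.
have wc : w^* = - w by rewrite -[RHS]mulr1 -ww mulrA mulNr -expr2 w2 opprK mul1r.
rewrite rmorphB rmorph1 /= wc.
by apply: (eq_by_lincomb1 (-1) w2); ring.
Qed.

End ComplexFacts.

Section EightVertexMatrix.
Variable R : realType.
Local Notation C := R[i].
Variables a b c d e f g h : C.

Definition eight_vertex_fun (i j : nat) : C :=
  nth 0 (nth [::] [:: [:: a; 0; 0; b]; [:: 0; c; d; 0]; [:: 0; e; f; 0]; [:: g; 0; 0; h]] i) j.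

Definition eight_vertex : 'M[C]_4 := mx_of_fun 4 4 eight_vertex_fun.

End EightVertexMatrix.

Ltac eval_entries :=
  rewrite /mulf /tensf /adjf /idf /eight_vertex_fun unlock /= /divn /modn /= ?conjC0.

Section EightVertex.
Variable R : realType.
Local Notation C := R[i].
Variables a b c d e f g h : C.
Local Notation M := (eight_vertex a b c d e f g h).

Lemma eight_vertex_col4 w0 w1 w2 w3 :
  M *m col4 w0 w1 w2 w3 =
  col4 (a * w0 + b * w3) (c * w1 + d * w2) (e * w1 + f * w2) (g * w0 + h * w3).
Proof.
rewrite mulmx_fun; apply/mx_of_funP => i j; rewrite (ord1 j).
by case: i => [[|[|[|[|//]]]] ?]; eval_entries; ring.
Qed.

Lemma tensor_det_eight_vertex x0 x1 y0 y1 :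
  tensor_det (M *m (col2 x0 x1 *t col2 y0 y1)) =
  a * g * (x0 * y0) ^+ 2 + b * h * (x1 * y1) ^+ 2
  - c * e * (x0 * y1) ^+ 2 - d * f * (x1 * y0) ^+ 2
  + (a * h + b * g - (c * f + d * e)) * (x0 * x1 * y0 * y1).
Proof. by rewrite tensmx_col2 eight_vertex_col4 tensor_det_col4; ring. Qed.

Lemma entangling_eight_vertex_corner : a * g != 0 -> entangling M.
Proof.
move=> ag_neq0; apply/entanglingP; exists (col2 1 0), (col2 1 0).
suff -> : tensor_det (M *m (col2 1 0 *t col2 1 0)) = a * g by [].
by rewrite tensor_det_eight_vertex; ring.
Qed.

Lemma entangling_eight_vertex_degenerate :
  a * g = 0 -> b * h = 0 -> c * e = 0 -> d * f = 0 ->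
  entangling M <-> a * h + b * g != c * f + d * e.
Proof.
move=> ag bh ce df; rewrite entanglingP; split=> [[u [v det_neq0]] | ].
  apply: contraNneq det_neq0 => E.
  rewrite (col2_eta u) (col2_eta v) tensor_det_eight_vertex ag bh ce df E subrr.
  by rewrite !mul0r !(addr0, subr0).
move=> H; exists (col2 1 1), (col2 1 1); apply: contra H => /eqP det0.
by rewrite -subr_eq0 -det0 tensor_det_eight_vertex ag bh ce df; apply/eqP; ring.
Qed.

Lemma eight_vertex_unitary :
  a * a^* + b * b^* = 1 -> g * g^* + h * h^* = 1 -> a * g^* + b * h^* = 0 ->
  c * c^* + d * d^* = 1 -> e * e^* + f * f^* = 1 -> c * e^* + d * f^* = 0 ->
  unitary M.
Proof.
move=> r00 r33 r03 r11 r22 r12.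
have r30 := orthoC_sym r03; have r21 := orthoC_sym r12.
apply/unitary_funP => i j.
by case: i => [[|[|[|[|//]]]] ?]; case: j => [[|[|[|[|//]]]] ?];
  eval_entries; rewrite ?(mulr0, mul0r, addr0, add0r).
Qed.

End EightVertex.

Section Forms.
Variable R : realType.
Local Notation C := R[i].

Definition form1 (M : 'M[C]_4) (a d e h : C) : Prop :=
  M = mx4 [:: a; 0; 0; 0] [:: 0; 0; d; 0] [:: 0; e; 0; 0] [:: 0; 0; 0; h] /\
  `|a| = 1 /\ `|d| = 1 /\ `|e| = 1 /\ `|h| = 1.

Definition form2 (M : 'M[C]_4) (b c g : C) : Prop :=
  M = mx4 [:: 0; 0; 0; b] [:: 0; c; 0; 0] [:: 0; 0; c; 0] [:: g; 0; 0; 0] /\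
  `|b| = 1 /\ `|c| = 1 /\ `|g| = 1.

Definition form3 (M : 'M[C]_4) (a b g : C) : Prop :=
  exists s : C, (s = 1 \/ s = -1) /\
  M = mx4 [:: a; 0; 0; b] [:: 0; a; s * a; 0] [:: 0; - s * a; a; 0] [:: g; 0; 0; a] /\
  b * g = - a ^+ 2 /\
  `|a| = (sqrtC 2)^-1 /\ `|b| = (sqrtC 2)^-1 /\ `|g| = (sqrtC 2)^-1.

Definition form4 (M : 'M[C]_4) (a b c d g h : C) : Prop :=
  M = mx4 [:: a; 0; 0; b] [:: 0; c; d; 0] [:: 0; d; c; 0] [:: g; 0; 0; h] /\
  (a != 0 /\ b != 0 /\ c != 0 /\ d != 0 /\ g != 0 /\ h != 0) /\
  a ^+ 2 - d ^+ 2 = d ^+ 2 - h ^+ 2 /\ d ^+ 2 - h ^+ 2 = a * c - h * c /\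
  a ^+ 2 + h ^+ 2 = 2 * d ^+ 2 /\ b * g = c ^+ 2 /\
  a * a^* + b * b^* = 1 /\ c * c^* + d * d^* = 1 /\ g * g^* + h * h^* = 1 /\
  a * g^* + b * h^* = 0 /\ c * d^* + d * c^* = 0.

Lemma braided_YBE_form1 (a d e h : C) : braided_YBE (eight_vertex a 0 0 d e 0 0 h).
Proof.
apply/braided_YBE_funP => i j.
by case: i => [[|[|[|[|[|[|[|[|//]]]]]]]] ?]; case: j => [[|[|[|[|[|[|[|[|//]]]]]]]] ?];
  eval_entries; ring.
Qed.

Lemma braided_YBE_form2 (b c g : C) : braided_YBE (eight_vertex 0 b c 0 0 c g 0).
Proof.
apply/braided_YBE_funP => i j.
by case: i => [[|[|[|[|[|[|[|[|//]]]]]]]] ?]; case: j => [[|[|[|[|[|[|[|[|//]]]]]]]] ?];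
  eval_entries; ring.
Qed.

Lemma unitary_form1 (a d e h : C) :
  `|a| = 1 -> `|d| = 1 -> `|e| = 1 -> `|h| = 1 -> unitary (eight_vertex a 0 0 d e 0 0 h).
Proof.
move=> /normC_eq1 aa /normC_eq1 dd /normC_eq1 ee /normC_eq1 hh.
by apply: eight_vertex_unitary; rewrite ?conjC0 ?(mulr0, mul0r, addr0, add0r).
Qed.

Lemma unitary_form2 (b c g : C) :
  `|b| = 1 -> `|c| = 1 -> `|g| = 1 -> unitary (eight_vertex 0 b c 0 0 c g 0).
Proof.
move=> /normC_eq1 bb /normC_eq1 cc /normC_eq1 gg.
by apply: eight_vertex_unitary; rewrite ?conjC0 ?(mulr0, mul0r, addr0, add0r).
Qed.

Lemma entangling_form1 (a d e h : C) :
  entangling (eight_vertex a 0 0 d e 0 0 h) <-> a * h != d * e.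
Proof. by rewrite entangling_eight_vertex_degenerate ?(mulr0, mul0r, addr0, add0r). Qed.

Lemma entangling_form2 (b c g : C) :
  entangling (eight_vertex 0 b c 0 0 c g 0) <-> b * g != c ^+ 2.
Proof. by rewrite entangling_eight_vertex_degenerate ?(mulr0, mul0r, addr0, add0r) -?expr2. Qed.

Lemma scalar_not_entangling (c : C) : ~ entangling (eight_vertex c 0 c 0 0 c 0 c).
Proof. by rewrite entangling_eight_vertex_degenerate ?mulr0 ?mul0r // eqxx. Qed.

End Forms.

Section Classification.
Variable R : realType.
Local Notation C := R[i].
Variables a b c d e f g h : C.
Local Notation M := (eight_vertex a b c d e f g h).
Hypotheses (hU : unitary M) (hY : braided_YBE M).

Let rows := (unitary_funP _ _).1 hU.
Let cols := unitary_fun_cols hU.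
Let ybe := (braided_YBE_funP _).1 hY.

(* rIJ, cIJ and yIJ are the entries (I, J) of M *m adjmx M = 1,
   adjmx M *m M = 1 and of the braided Yang-Baxter equation. *)
Let r00 : a * a^* + b * b^* = 1.
Proof. by apply: (eq_by_lincomb1 1 (rows 0 0)); eval_entries; ring. Qed.
Let r03 : a * g^* + b * h^* = 0.
Proof. by apply: (eq_by_lincomb1 1 (rows 0 3)); eval_entries; ring. Qed.
Let r11 : c * c^* + d * d^* = 1.
Proof. by apply: (eq_by_lincomb1 1 (rows 1 1)); eval_entries; ring. Qed.
Let r12 : c * e^* + d * f^* = 0.
Proof. by apply: (eq_by_lincomb1 1 (rows 1 2)); eval_entries; ring. Qed.
Let r33 : g * g^* + h * h^* = 1.
Proof. by apply: (eq_by_lincomb1 1 (rows 3 3)); eval_entries; ring. Qed.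
Let c03 : a^* * b + g^* * h = 0.
Proof. by apply: (eq_by_lincomb1 1 (cols 0 3)); eval_entries; ring. Qed.
Let c11 : c^* * c + e^* * e = 1.
Proof. by apply: (eq_by_lincomb1 1 (cols 1 1)); eval_entries; ring. Qed.
Let c12 : c^* * d + e^* * f = 0.
Proof. by apply: (eq_by_lincomb1 1 (cols 1 2)); eval_entries; ring. Qed.
Let c22 : d^* * d + f^* * f = 1.
Proof. by apply: (eq_by_lincomb1 1 (cols 2 2)); eval_entries; ring. Qed.
Let c33 : b^* * b + h^* * h = 1.
Proof. by apply: (eq_by_lincomb1 1 (cols 3 3)); eval_entries; ring. Qed.

Let y00 : b * g * f = b * g * c.
Proof. by apply: (eq_by_lincomb1 1 (ybe 0 0)); eval_entries; ring. Qed.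
Let y03 : b * (e ^+ 2 + a * c) = b * (a ^+ 2 + c * h).
Proof. by apply: (eq_by_lincomb1 1 (ybe 0 3)); eval_entries; ring. Qed.
Let y11 : b * g * h + c * a ^+ 2 = c * (a * c + d * e).
Proof. by apply: (eq_by_lincomb1 1 (ybe 1 1)); eval_entries; ring. Qed.
Let y12 : b * e * g = c * d * f.
Proof. by apply: (eq_by_lincomb1 1 (ybe 1 2)); eval_entries; ring. Qed.
Let y17 : b * (h ^+ 2 + a * c) = b * (d ^+ 2 + c * h).
Proof. by apply: (eq_by_lincomb1 1 (ybe 1 7)); eval_entries; ring. Qed.
Let y21 : b * d * g = c * e * f.
Proof. by apply: (eq_by_lincomb1 1 (ybe 2 1)); eval_entries; ring. Qed.
Let y22 : c * f * f = c * f * c.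
Proof. by apply: (eq_by_lincomb1 (-1) (ybe 2 2)); eval_entries; ring. Qed.
Let y33 : c * (c * h + d * e) = c * h ^+ 2 + a * b * g.
Proof. by apply: (eq_by_lincomb1 1 (ybe 3 3)); eval_entries; ring. Qed.

Let two_neq0 : (2 : C) != 0. Proof. by rewrite pnatr_eq0. Qed.

Lemma corner_eq0 : b = 0 \/ g = 0 -> b = 0 /\ g = 0.
Proof.
case=> [b0 | g0]; subst.
  have hh : h * h^* = 1 by rewrite mulrC -c33 conjC0 mul0r add0r.
  split=> //; apply/eqP; rewrite -conjC_eq0; apply/eqP.
  by apply: (mulIf (mul_conjC1_neq0 hh)); rewrite mul0r -c03 mulr0 add0r.
have hh : h * h^* = 1 by rewrite -r33 mul0r add0r.
have hc_neq0 : h^* != 0 by rewrite conjC_eq0 (mul_conjC1_neq0 hh).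
by split=> //; apply: (mulIf hc_neq0); rewrite mul0r -r03 conjC0 mulr0 add0r.
Qed.

Lemma diagonal_form1 : b = 0 -> g = 0 -> c = 0 -> form1 M a d e h.
Proof.
move=> b0 g0 c0; subst.
move: (r00) (r11) (r33) (c11) (c12); rewrite ?conjC0 ?(mul0r, mulr0, addr0, add0r).
move=> aa dd hh ee ef; rewrite mulrC in ee.
have ec_neq0 : e^* != 0 by rewrite conjC_eq0 (mul_conjC1_neq0 ee).
have f0 : f = 0 by apply: (mulfI ec_neq0); rewrite mulr0.
by subst; do !split=> //; apply/normC_eq1.
Qed.

Lemma diagonal_scalar : b = 0 -> g = 0 -> c != 0 ->
  [/\ a = c, d = 0, e = 0, f = c & h = c].
Proof.
move=> b0 g0 c_neq0; subst.
move: (r00) (r33) (c12) (c22) (y11) (y12) (y21) (y33).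
rewrite ?conjC0 ?(mul0r, mulr0, addr0, add0r) => aa hh cd_ef dd_ff y11' cdf cef y33'.
have f_neq0 : f != 0.
  apply/eqP => f0; rewrite f0 ?conjC0 ?(mulr0, addr0) in cd_ef dd_ff.
  have cc_neq0 : c^* != 0 by rewrite conjC_eq0.
  have d0 : d = 0 by apply: (mulfI cc_neq0); rewrite mulr0.
  by move: dd_ff; rewrite d0 conjC0 ?(mul0r, addr0) => /eqP; rewrite eq_sym oner_eq0.
have d0 : d = 0.
  by apply: (mulIf f_neq0); apply: (mulfI c_neq0); rewrite mulrA -cdf mul0r mulr0.
have e0 : e = 0.
  by apply: (mulIf f_neq0); apply: (mulfI c_neq0); rewrite mulrA -cef mul0r mulr0.
subst; rewrite ?(mul0r, mulr0, addr0) in y11' y33'.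
split=> //.
- by apply: (mulfI (mul_conjC1_neq0 aa)); rewrite -expr2 (mulfI c_neq0 y11').
- exact: (mulfI (mulf_neq0 c_neq0 f_neq0) y22).
- by apply: (mulfI (mul_conjC1_neq0 hh)); rewrite -expr2 mulrC (mulfI c_neq0 y33').
Qed.

Lemma f_eq_c : b != 0 -> g != 0 -> f = c.
Proof. by move=> b_neq0 g_neq0; apply: (mulfI (mulf_neq0 b_neq0 g_neq0) y00). Qed.

Lemma bg_eq_Nsqr_c : b != 0 -> g != 0 -> d != e -> b * g = - c ^+ 2.
Proof.
move=> b_neq0 g_neq0; have fc := f_eq_c b_neq0 g_neq0; subst f.
have : (d - e) * (b * g + c ^+ 2) = 0 by apply: (eq_by_lincomb2 (-1) 1 y12 y21); ring.
move/eqP; rewrite mulf_eq0 subr_eq0 => /orP[/eqP-> | /eqP bg _]; first by rewrite eqxx.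
by apply: (eq_by_lincomb1 1 bg); ring.
Qed.

Lemma form2_case : b != 0 -> g != 0 -> d = 0 -> e = 0 -> form2 M b c g.
Proof.
move=> b_neq0 g_neq0 d0 e0; have fc := f_eq_c b_neq0 g_neq0; subst.
have ac_eq : a * c = a ^+ 2 + c * h.
  by have := mulfI b_neq0 y03; rewrite [0 ^+ 2]expr2 mul0r add0r.
have hac : h ^+ 2 + a * c = c * h.
  by have := mulfI b_neq0 y17; rewrite [0 ^+ 2]expr2 mul0r add0r.
have h2 : h ^+ 2 = - a ^+ 2 by apply: (eq_by_lincomb2 (-1) 1 ac_eq hac); ring.
have cc : c * c^* = 1 by rewrite -r11 conjC0 mulr0 addr0.
have a0 : a = 0.
  (* Otherwise a = c (1 - w) with w = h / a a square root of -1, so |a|^2 = 2. *)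
  apply/eqP; apply: contraT => a_neq0.
  have [w [w2 caw]] : exists w, w ^+ 2 = -1 /\ a = c * (1 - w).
    exists (h / a); split; first by rewrite expr_div_n h2 mulNr divff // expf_neq0.
    by apply: (eq_by_lincomb1 (- a^-1) ac_eq); field.
  have aa : a * a^* = 2 by rewrite caw rmorphM /= mulrACA cc mul_conjC_1subr ?mul1r.
  have bb : b * b^* = -1 by apply: (eq_by_lincomb2 1 (-1) r00 aa); ring.
  by have := mul_conjC_ge0 b; rewrite bb ler0N1.
subst; move: h2; rewrite [0 ^+ 2]expr2 mul0r oppr0 => /eqP; rewrite sqrf_eq0 => /eqP h0.
subst; move: (r00) (r33); rewrite conjC0 ?(mul0r, mulr0, addr0, add0r) => bb gg.
by do !split=> //; apply/normC_eq1.
Qed.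

Lemma form4_case : b != 0 -> g != 0 -> e = d -> d != 0 -> form4 M a b c d g h.
Proof.
move=> b_neq0 g_neq0 ed d_neq0; have fc := f_eq_c b_neq0 g_neq0; subst.
have bg : b * g = c ^+ 2 by apply: (mulfI d_neq0); apply: (eq_by_lincomb1 1 y12); ring.
have da : d ^+ 2 + a * c = a ^+ 2 + c * h := mulfI b_neq0 y03.
have hd : h ^+ 2 + a * c = d ^+ 2 + c * h := mulfI b_neq0 y17.
have gc_neq0 : g^* != 0 by rewrite conjC_eq0.
have a_neq0 : a != 0.
  apply: contra_neq d_neq0 => a0; subst a.
  have h0 : h = 0.
    by apply: (mulfI gc_neq0); rewrite mulr0 -c03 conjC0 mul0r add0r.
  apply/eqP; rewrite -sqrf_eq0; apply/eqP.
  by move: da; rewrite h0 mulr0 mul0r !addr0 [0 ^+ 2]expr2 mulr0.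
have h_neq0 : h != 0.
  apply: contra_neq a_neq0 => h0; subst h.
  by apply: (mulIf gc_neq0); rewrite mul0r -r03 conjC0 mulr0 addr0.
have c_neq0 : c != 0 by rewrite -sqrf_eq0 -bg mulf_neq0.
do !split=> //.
- by apply: (eq_by_lincomb2 (-1) 1 da hd); ring.
- by apply: (eq_by_lincomb1 (-1) hd); ring.
- by apply: (eq_by_lincomb2 (-1) 1 da hd); ring.
Qed.

Lemma form3_case : b != 0 -> g != 0 -> d != e -> form3 M a b g.
Proof.
move=> b_neq0 g_neq0 d_neq_e; have bg := bg_eq_Nsqr_c b_neq0 g_neq0 d_neq_e.
have fc := f_eq_c b_neq0 g_neq0; subst f.
have c_neq0 : c != 0 by rewrite -sqrf_eq0 -oppr_eq0 -bg mulf_neq0.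
have ed : e = - d.
  by apply: (mulfI (expf_neq0 2 c_neq0)); apply: (eq_by_lincomb2 (-1) e y12 bg); ring.
subst e.
have i1 : a ^+ 2 + d ^+ 2 = c * (a + h).
  by apply: (mulfI c_neq0); apply: (eq_by_lincomb2 1 (- h) y11 bg); ring.
have i2 : d ^+ 2 + a * c = a ^+ 2 + c * h by have := mulfI b_neq0 y03; rewrite sqrrN.
have i3 : c * (a + h) = h ^+ 2 + d ^+ 2.
  by apply: (mulfI c_neq0); apply: (eq_by_lincomb2 1 a y33 bg); ring.
have i4 : h ^+ 2 + a * c = d ^+ 2 + c * h := mulfI b_neq0 y17.
have a_ac : a * (a - c) = 0.
  by apply: (mulfI two_neq0); rewrite mulr0; apply: (eq_by_lincomb2 1 (-1) i1 i2); ring.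
have d2 : d ^+ 2 = a * c.
  by apply: (mulfI two_neq0); apply: (eq_by_lincomb2 (-1) (-1) i3 i4); ring.
have h_hc : h * (h - c) = 0.
  by apply: (mulfI two_neq0); rewrite mulr0; apply: (eq_by_lincomb2 (-1) 1 i3 i4); ring.
have d_neq0 : d != 0 by apply: contra_neq d_neq_e => ->; rewrite oppr0.
have a_neq0 : a != 0.
  by apply: contra_neq d_neq0 => a0; apply/eqP; rewrite -sqrf_eq0 d2 a0 mul0r.
move/eqP: a_ac; rewrite mulf_eq0 (negbTE a_neq0) subr_eq0 => /eqP ac; subst c.
have h_neq0 : h != 0.
  apply: contra_neq d_neq0 => h0; apply/eqP; rewrite -sqrf_eq0; apply/eqP.
  by apply: (eq_by_lincomb1 1 i2); rewrite h0; ring.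
move/eqP: h_hc; rewrite mulf_eq0 (negbTE h_neq0) subr_eq0 => /eqP ha; subst h.
have /orP[/eqP da | /eqP da] : (d == a) || (d == - a) by rewrite -eqf_sqr d2 expr2.
all: subst d; move: (r11); rewrite ?rmorphN /= ?mulrNN => r11'.
all: have aa : a * a^* = 2^-1 by apply: (eq_by_lincomb1 (2^-1 : C) r11'); field.
all: have bb : b * b^* = 2^-1 by apply: (eq_by_lincomb2 1 (-1) r00 aa); field.
all: have gg : g * g^* = 2^-1 by apply: (eq_by_lincomb2 1 (-1) r33 aa); field.
- exists 1; split; first by left.
  by rewrite mul1r mulN1r; do !split=> //; apply: normC_invsqrt2.
- exists (-1); split; first by right.
  by rewrite mulN1r !opprK mul1r; do !split=> //; apply: normC_invsqrt2.
Qed.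

Lemma eight_vertex_classification : entangling M ->
  form1 M a d e h \/ form2 M b c g \/ form3 M a b g \/ form4 M a b c d g h.
Proof.
move=> entM; have [bg0 | ] := boolP ((b == 0) || (g == 0)).
  have [b0 g0] : b = 0 /\ g = 0.
    by apply: corner_eq0; case/orP: bg0 => /eqP; [left | right].
  have [c0 | c_neq0] := eqVneq c 0; first by left; apply: diagonal_form1.
  case: (diagonal_scalar b0 g0 c_neq0) => ac d0 e0 fc hc.
  by move: entM; rewrite b0 g0 ac d0 e0 fc hc => /scalar_not_entangling.
rewrite negb_or => /andP[b_neq0 g_neq0].
have [de | d_neq_e] := eqVneq d e; last by right; right; left; exact: form3_case.
have [d0 | d_neq0] := eqVneq d 0.
  by right; left; apply: form2_case; rewrite // -de.
by right; right; right; exact: form4_case b_neq0 g_neq0 (esym de) d_neq0.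
Qed.

End Classification.

Theorem mainTheorem2 (R : realType) :
  (* classification *)
  (forall a b c d e f g h : R[i],
     let M := mx4 [:: a; 0; 0; b] [:: 0; c; d; 0] [:: 0; e; f; 0] [:: g; 0; 0; h] in
     unitary M -> braided_YBE M -> entangling M ->
     (* form 1 *)
     (M = mx4 [:: a; 0; 0; 0] [:: 0; 0; d; 0] [:: 0; e; 0; 0] [:: 0; 0; 0; h] /\
      `|a| = 1 /\ `|d| = 1 /\ `|e| = 1 /\ `|h| = 1)
     \/
     (* form 2 *)
     (M = mx4 [:: 0; 0; 0; b] [:: 0; c; 0; 0] [:: 0; 0; c; 0] [:: g; 0; 0; 0] /\
      `|b| = 1 /\ `|c| = 1 /\ `|g| = 1)
     \/
     (* form 3 *)
     (exists s : R[i], (s = 1 \/ s = -1) /\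
      M = mx4 [:: a; 0; 0; b] [:: 0; a; s * a; 0] [:: 0; - s * a; a; 0] [:: g; 0; 0; a] /\
      b * g = - a ^+ 2 /\
      `|a| = (sqrtC 2)^-1 /\ `|b| = (sqrtC 2)^-1 /\ `|g| = (sqrtC 2)^-1)
     \/
     (* form 4 *)
     (M = mx4 [:: a; 0; 0; b] [:: 0; c; d; 0] [:: 0; d; c; 0] [:: g; 0; 0; h] /\
      (a != 0 /\ b != 0 /\ c != 0 /\ d != 0 /\ g != 0 /\ h != 0) /\
      a ^+ 2 - d ^+ 2 = d ^+ 2 - h ^+ 2 /\ d ^+ 2 - h ^+ 2 = a * c - h * c /\
      a ^+ 2 + h ^+ 2 = 2 * d ^+ 2 /\ b * g = c ^+ 2 /\
      a * a^* + b * b^* = 1 /\ c * c^* + d * d^* = 1 /\ g * g^* + h * h^* = 1 /\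
      a * g^* + b * h^* = 0 /\ c * d^* + d * c^* = 0))
  /\
  (* form 1 matrices: unitary YBE solutions, entangling iff ah <> de *)
  (forall a d e h : R[i],
     `|a| = 1 -> `|d| = 1 -> `|e| = 1 -> `|h| = 1 ->
     let M := mx4 [:: a; 0; 0; 0] [:: 0; 0; d; 0] [:: 0; e; 0; 0] [:: 0; 0; 0; h] in
     unitary M /\ braided_YBE M /\ (entangling M <-> a * h != d * e))
  /\
  (* form 2 matrices: unitary YBE solutions, entangling iff bg <> c^2 *)
  (forall b c g : R[i],
     `|b| = 1 -> `|c| = 1 -> `|g| = 1 ->
     let M := mx4 [:: 0; 0; 0; b] [:: 0; c; 0; 0] [:: 0; 0; c; 0] [:: g; 0; 0; 0] in
     unitary M /\ braided_YBE M /\ (entangling M <-> b * g != c ^+ 2))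
  /\
  (* form 3 matrices are always entangling *)
  (forall a b g s : R[i], (s = 1 \/ s = -1) ->
     b * g = - a ^+ 2 ->
     `|a| = (sqrtC 2)^-1 -> `|b| = (sqrtC 2)^-1 -> `|g| = (sqrtC 2)^-1 ->
     entangling (mx4 [:: a; 0; 0; b] [:: 0; a; s * a; 0] [:: 0; - s * a; a; 0] [:: g; 0; 0; a]))
  /\
  (* form 4 matrices are always entangling *)
  (forall a b c d g h : R[i],
     (a != 0 /\ b != 0 /\ c != 0 /\ d != 0 /\ g != 0 /\ h != 0) ->
     a ^+ 2 - d ^+ 2 = d ^+ 2 - h ^+ 2 -> d ^+ 2 - h ^+ 2 = a * c - h * c ->
     a ^+ 2 + h ^+ 2 = 2 * d ^+ 2 -> b * g = c ^+ 2 ->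
     a * a^* + b * b^* = 1 -> c * c^* + d * d^* = 1 -> g * g^* + h * h^* = 1 ->
     a * g^* + b * h^* = 0 -> c * d^* + d * c^* = 0 ->
     entangling (mx4 [:: a; 0; 0; b] [:: 0; c; d; 0] [:: 0; d; c; 0] [:: g; 0; 0; h])).
Proof.
have neq0 (x : R[i]) : `|x| = (sqrtC 2)^-1 -> x != 0.
  by move=> xn; rewrite -normr_eq0 xn invr_eq0 sqrtC_eq0 pnatr_eq0.
split.
  by move=> a b c d e f g h M; exact: (@eight_vertex_classification R a b c d e f g h).
split.
  move=> a d e h Ha Hd He Hh M; split; first exact: unitary_form1.
  by split; [exact: braided_YBE_form1 | exact: entangling_form1].
split.
  move=> b c g Hb Hc Hg M; split; first exact: unitary_form2.
  by split; [exact: braided_YBE_form2 | exact: entangling_form2].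
split.
  move=> a b g s _ _ Ha _ Hg.
  apply: (@entangling_eight_vertex_corner R a b a (s * a) (- s * a) a g a).
  by rewrite mulf_neq0 ?neq0.
move=> a b c d g h [a_neq0 [_ [_ [_ [g_neq0 _]]]]] *.
by apply: (@entangling_eight_vertex_corner R a b c d d c g h); rewrite mulf_neq0.
Qed.
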